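(* Let $H$, $L$ be as in the context and let $k$ be a positive integer. If there is a feasible solution $(S,\mathcal T_0)$ with $d(S,\mathcal T_0)\ge k$, then $L\ge L_{LB}$, where $L_{LB}$ is the smallest positive divisor of $Z$ satisfying $L_{LB}\ge k\cdot\omega(H)$.
   Context: Notation: $[n)=\{0,1,\dots,n-1\}$. Let $M,N,Z$ be positive integers and let $H$ be a binary $MZ\times NZ$ matrix made of $M\times N$ blocks, each a $Z\times Z$ circulant; assume $H$ has no zero row and no two identical rows. For $\mathcal A\subseteq[MZ)$, $H_{\mathcal A}$ is the submatrix of rows indexed by $\mathcal A$; $\omega(A)$ is the maximum Hamming weight of a column of $A$ ($\omega$ of the empty matrix is $0$). For $i\in[MZ)$ and integer $s$, $\pi^s(i)=Z\lfloor i/Z\rfloor+((i+s)\bmod Z)$ and $\pi^s(\mathcal T)=\{\pi^s(x):x\in\mathcal T\}$. Fix an integer $L>1$. A pair $(S,\mathcal T_0)$ ($S$ a positive integer, $\mathcal T_0\subseteq[MZ)$) is a feasible solution if, with $\mathcal T_l=\pi^{lS}(\mathcal T_0)$ for $l\in[L)$, the sets $\mathcal T_0,\dots,\mathcal T_{L-1}$ are pairwise disjoint with union $[MZ)$. The layer distance $d(S,\mathcal T_0)$ is the largest $l\in[L)$ such that the vertical stack of $H_{\mathcal T_0},\dots,H_{\mathcal T_{l-1}}$ has maximum column weight at most $1$. *)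

From mathcomp Require Import all_boot all_order all_algebra.
Set Implicit Arguments. Unset Strict Implicit. Unset Printing Implicit Defensive.

Definition pin (Z s i : nat) : nat := Z * (i %/ Z) + (i + s) %% Z.

Lemma pin_lt (K Z s i : nat) : 0 < Z -> i < K * Z -> pin Z s i < K * Z.
Proof.
move=> Z0 iK; rewrite /pin.
have hq : i %/ Z < K by rewrite ltn_divLR.
have hr : (i + s) %% Z < Z by rewrite ltn_mod.
apply: (@leq_trans (Z * (i %/ Z) + Z)); first by rewrite ltn_add2l.
by rewrite -mulnSr mulnC leq_mul2r hq orbT.
Qed.

(* pi^s as a map on 'I_(K*Z) (identity in the degenerate case Z = 0). *)
Definition piO (K Z s : nat) (i : 'I_(K * Z)) : 'I_(K * Z) :=
  match ltnP 0 Z with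
  | LtnNotGeq Z0 => Ordinal (pin_lt s Z0 (ltn_ord i))
  | _ => i
  end.

(* H is made of K1 x K2 blocks, each a Z x Z circulant matrix. *)
Definition block_circulant (M N Z : nat) (H : 'M[bool]_(M * Z, N * Z)) :=
  forall (i : 'I_(M * Z)) (j : 'I_(N * Z)),
    H (piO 1 i) (piO 1 j) = H i j.

Definition no_zero_row (m n : nat) (H : 'M[bool]_(m, n)) :=
  forall i : 'I_m, exists j : 'I_n, H i j.
Definition distinct_rows (m n : nat) (H : 'M[bool]_(m, n)) :=
  forall i i' : 'I_m, (forall j, H i j = H i' j) -> i = i'.

Definition omega (m n : nat) (H : 'M[bool]_(m, n)) : nat :=
  \max_(j < n) \sum_(i < m) (H i j : nat).

Definition layer (M Z S : nat) (T0 : {set 'I_(M * Z)}) (l : nat)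
  : {set 'I_(M * Z)} := [set piO (l * S) x | x in T0].

Definition feasible (M Z L S : nat) (T0 : {set 'I_(M * Z)}) : Prop :=
  0 < S /\
  (forall l l', l < L -> l' < L -> l != l' ->
     [disjoint @layer M Z S T0 l & @layer M Z S T0 l']) /\
  \bigcup_(l < L) @layer M Z S T0 l = [set: 'I_(M * Z)].

(* weight of column j of the vertical stack of H_{T_0}, ..., H_{T_{l-1}} *)
Definition stack_colw (M N Z S : nat) (H : 'M[bool]_(M * Z, N * Z))
  (T0 : {set 'I_(M * Z)}) (l : nat) (j : 'I_(N * Z)) : nat :=
  \sum_(t < l) \sum_(i in @layer M Z S T0 t) (H i j : nat).

Definition stack_ok M N Z S H T0 (l : nat) : bool :=
  [forall j, @stack_colw M N Z S H T0 l j <= 1].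

(* layer distance: largest l in [L) with stack_ok (l = 0 always qualifies) *)
Definition layer_distance M N Z L S H T0 : nat :=
  \max_(l < L | @stack_ok M N Z S H T0 l) (l : nat).

Definition is_min_div_ge (Z b D : nat) : Prop :=
  [/\ 0 < D, D %| Z, b <= D &
      forall D', 0 < D' -> D' %| Z -> b <= D' -> D <= D'].

From mathcomp Require Import all_boot all_order all_algebra.
From mathcomp Require Import zify.

Set Implicit Arguments.
Unset Strict Implicit.
Unset Printing Implicit Defensive.

(* Every row i meets the layers through its orbit {pi^s(i) : s < Z}: a layer
   is a rotation of T_0, so each of the L layers contains the same number
   f(i) of points of the orbit, and since the layers partition the rows,
   L * f(i) = Z; in particular L divides Z.  Summing the column weight of the
   stack of l layers over the orbit of a column j and using the circulant
   symmetry of H gives l * w_j * Z / L, where w_j is the weight of column j of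
   H.  If the stack has column weights at most 1 this sum is at most Z, hence
   l * w_j <= L for every j, i.e. l * omega(H) <= L.  So L is a positive
   divisor of Z that is at least k * omega(H), and the least such divisor is
   at most L. *)

Lemma big_ord_rot_mod (R : Type) (idx : R) (op : Monoid.com_law idx)
    (Z c : nat) (F : nat -> R) :
  \big[op/idx]_(s < Z) F ((s + c) %% Z) = \big[op/idx]_(s < Z) F s.
Proof.
case: Z => [|Z]; first by rewrite !big_ord0.
pose rot (s : 'I_Z.+1) : 'I_Z.+1 := Ordinal (ltn_pmod (s + c) (ltn0Sn Z)).
have rot_inj : injective rot.
  move=> s s' /(congr1 val) /= /eqP; rewrite eqn_modDr !modn_small //.
  by move/eqP/val_inj.
by rewrite [RHS](reindex_inj rot_inj).
Qed.

Lemma modn_compl_add (Z s : nat) : 0 < Z -> (Z - s %% Z + s) %% Z = 0.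
Proof.
move=> Z_gt0; have := divn_eq s Z; have := ltn_mod s Z.
rewrite Z_gt0 => lt_r eq_s.
have -> : Z - s %% Z + s = (s %/ Z).+1 * Z by rewrite mulSn; lia.
by rewrite modnMl.
Qed.

Lemma exists_min_div_ge (Z b D : nat) :
  0 < D -> D %| Z -> b <= D -> exists2 D0, is_min_div_ge Z b D0 & D0 <= D.
Proof.
move=> D_gt0 D_dvd b_le.
have exD : exists D', [&& 0 < D', D' %| Z & b <= D'] by exists D; apply/and3P.
case: (ex_minnP exD) => D0 /and3P[D0_gt0 D0_dvd b_le0] D0_min.
exists D0; last by apply: D0_min; apply/and3P.
by split=> // D' D'_gt0 D'_dvd b_le'; apply: D0_min; apply/and3P.
Qed.

Section Rotation.

Variables K Z : nat.
Hypothesis Z_gt0 : 0 < Z.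
Implicit Types (i : 'I_(K * Z)) (s : nat) (T : {set 'I_(K * Z)}).

Lemma piOE s i : val (piO s i) = pin Z s i.
Proof. by rewrite /piO; case: ltnP => //; rewrite leqNgt Z_gt0. Qed.

Lemma pinD a b (x : nat) : pin Z a (pin Z b x) = pin Z (a + b) x.
Proof.
have r_lt : (x + b) %% Z < Z by rewrite ltn_mod.
rewrite /pin [Z * (x %/ Z)]mulnC divnMDl // (divn_small r_lt) addn0.
by rewrite -addnA modnMDl modnDml addnAC -addnA (addnC a) mulnC.
Qed.

Lemma piOD a b i : piO a (piO b i) = piO (a + b) i.
Proof. by apply: val_inj; rewrite /= !piOE pinD. Qed.

Lemma piO_modn s i : piO (s %% Z) i = piO s i.
Proof. by apply: val_inj; rewrite /= !piOE /pin modnDmr. Qed.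

Lemma piO0 i : piO 0 i = i.
Proof. by apply: val_inj; rewrite /= piOE /pin addn0 mulnC -divn_eq. Qed.

Lemma piOK s : cancel (@piO K Z s) (piO (Z - s %% Z)).
Proof. by move=> i; rewrite piOD -piO_modn modn_compl_add // piO0. Qed.

Lemma piOKV s : cancel (@piO K Z (Z - s %% Z)) (piO s).
Proof. by move=> i; rewrite piOD addnC -piO_modn modn_compl_add // piO0. Qed.

Lemma piO_inj s : injective (@piO K Z s).
Proof. exact: can_inj (piOK s). Qed.

Definition orbit_hits (A : {set 'I_(K * Z)}) i : nat :=
  \sum_(s < Z) (piO s i \in A : nat).

Lemma mem_layer S T t i :
  (i \in layer S T t) = (piO (Z - (t * S) %% Z) i \in T).
Proof.
apply/imsetP/idP => [[x xT ->] | iT]; first by rewrite piOK.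
by exists (piO (Z - (t * S) %% Z) i); rewrite ?piOKV.
Qed.

Lemma orbit_hits_layer S T t i : orbit_hits (layer S T t) i = orbit_hits T i.
Proof.
rewrite /orbit_hits.
under eq_bigr => s _ do rewrite mem_layer piOD addnC -piO_modn.
exact: (big_ord_rot_mod _ _ _ (fun s => (piO s i \in T : nat))).
Qed.

Lemma feasible_sum_layers L S T i :
  feasible L S T -> \sum_(t < L) (i \in layer S T t : nat) = 1.
Proof.
case=> _ [disj cover].
have : i \in \bigcup_(t < L) layer S T t by rewrite cover inE.
case/bigcupP=> t0 _ i_t0; rewrite (bigD1 t0) //= i_t0 big1 // => t ne_t.
have /disj disj_t : t0 != t :> nat by rewrite eq_sym.
by rewrite (disjointFr (disj_t (ltn_ord t0) (ltn_ord t))).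
Qed.

Lemma feasible_orbit_hits L S T i :
  feasible L S T -> L * orbit_hits T i = Z.
Proof.
move=> feas; rewrite -[L in L * _]card_ord -sum_nat_const.
under eq_bigr => t _ do rewrite -(orbit_hits_layer S T t).
rewrite exchange_big /=.
under eq_bigr => s _ do rewrite feasible_sum_layers //.
by rewrite sum_nat_const card_ord muln1.
Qed.

Lemma feasible_dvdn L S T : 0 < K -> feasible L S T -> L %| Z.
Proof.
move=> K_gt0 feas; have KZ_gt0 : 0 < K * Z by rewrite muln_gt0 K_gt0.
by rewrite -(feasible_orbit_hits (Ordinal KZ_gt0) feas) dvdn_mulr.
Qed.

End Rotation.

Definition col_weight (m n : nat) (A : 'M[bool]_(m, n)) (j : 'I_n) : nat :=
  \sum_(i < m) (A i j : nat).

Section StackedColumns.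

Variables M N Z : nat.
Hypothesis Z_gt0 : 0 < Z.
Variable H : 'M[bool]_(M * Z, N * Z).
Hypothesis H_circ : block_circulant H.
Implicit Types (T : {set 'I_(M * Z)}) (s : nat).

Lemma block_circulant_piO s i j : H (piO s i) (piO s j) = H i j.
Proof.
elim: s => [|s IHs] in i j *; first by rewrite !piO0.
by rewrite -add1n -!piOD // H_circ IHs.
Qed.

Lemma sum_layer_col_piO S T t s j :
  \sum_(i in layer S T t) (H i (piO s j) : nat) =
  \sum_i (piO s i \in layer S T t : nat) * H i j.
Proof.
rewrite (reindex_inj (@piO_inj M Z Z_gt0 s)) big_mkcond /=.
apply: eq_bigr => i _; rewrite block_circulant_piO.
by case: (_ \in _); rewrite ?mul1n ?mul0n.
Qed.

Lemma sum_orbit_stack_colw S T l j :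
  \sum_(s < Z) stack_colw S H T l (piO s j) =
  \sum_i H i j * (l * orbit_hits T i).
Proof.
rewrite /stack_colw.
under [LHS]eq_bigr => s _ do under eq_bigr => t _ do rewrite sum_layer_col_piO.
rewrite exchange_big /=; under eq_bigr => t _ do rewrite exchange_big /=.
rewrite exchange_big /=; apply: eq_bigr => i _.
under eq_bigr => t _ do
  rewrite -big_distrl -/(orbit_hits (layer S T t) i) orbit_hits_layer //.
by rewrite -big_distrl /= sum_nat_const card_ord mulnC.
Qed.

Lemma feasible_sum_orbit_stack_colw L S T l j : feasible L S T ->
  L * \sum_(s < Z) stack_colw S H T l (piO s j) = l * col_weight H j * Z.
Proof.
move=> feas; rewrite sum_orbit_stack_colw /col_weight !big_distrr big_distrl /=.
apply: eq_bigr => i _; have := feasible_orbit_hits Z_gt0 i feas.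
by move: (orbit_hits T i) (H i j : nat) => f h <-; nia.
Qed.

Lemma stack_ok_col_weight L S T l j :
  feasible L S T -> stack_ok S H T l -> l * col_weight H j <= L.
Proof.
move=> feas ok; rewrite -(leq_pmul2r Z_gt0).
rewrite -(feasible_sum_orbit_stack_colw l j feas).
rewrite leq_mul2l -[leqRHS]card_ord -sum1_card leq_sum ?orbT // => s _.
exact: (forallP ok).
Qed.

Lemma stack_ok_omega L S T l :
  feasible L S T -> stack_ok S H T l -> l * omega H <= L.
Proof.
move=> feas ok; case: (posnP l) => [-> // | l_gt0].
rewrite mulnC -leq_divRL //; apply/bigmax_leqP => j _.
by rewrite leq_divRL // mulnC; exact: stack_ok_col_weight feas ok.
Qed.

End StackedColumns.

Lemma layer_distance_attained M N Z L S (H : 'M[bool]_(M * Z, N * Z))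
    (T : {set 'I_(M * Z)}) :
  0 < L -> exists2 l : 'I_L, stack_ok S H T l & layer_distance L S H T = l.
Proof.
move=> L_gt0; have ok0 : stack_ok S H T (Ordinal L_gt0).
  by apply/forallP => j; rewrite /stack_colw big_ord0.
have ok_gt0 : 0 < #|[pred l : 'I_L | stack_ok S H T l]|.
  by apply/card_gt0P; exists (Ordinal L_gt0).
rewrite /layer_distance.
have [l ok_l ->] := eq_bigmax_cond (fun l : 'I_L => val l) ok_gt0.
by exists l.
Qed.

Theorem corollary1 (M N Z L k : nat) (H : 'M[bool]_(M * Z, N * Z)) :
  0 < M -> 0 < N -> 0 < Z -> 1 < L -> 0 < k ->
  block_circulant H -> no_zero_row H -> distinct_rows H ->
  (exists (S : nat) (T0 : {set 'I_(M * Z)}),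
      feasible L S T0 /\ k <= layer_distance L S H T0) ->
  exists LLB : nat, is_min_div_ge Z (k * omega H) LLB /\ LLB <= L.
Proof.
move=> M_gt0 _ Z_gt0 L_gt1 _ H_circ _ _ [S [T [feas k_le]]].
have L_gt0 : 0 < L by apply: ltnW.
have [l ok_l dist_l] := layer_distance_attained S H T L_gt0.
have kw_le : k * omega H <= L.
  apply: leq_trans (stack_ok_omega Z_gt0 H_circ feas ok_l).
  by rewrite leq_mul2r -dist_l k_le orbT.
have L_dvd : L %| Z := feasible_dvdn Z_gt0 M_gt0 feas.
by have [D D_min D_le] := exists_min_div_ge L_gt0 L_dvd kw_le; exists D.
Qed.
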